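(* For every string $s\in\Sigma^*$, $\mathcal{F}^{-1}(\mathcal{F}(s))=s$.
   Context: Let $\Sigma$ be an alphabet and let $\texttt{@},\texttt{\$}$ be two distinct symbols not in $\Sigma$. For $s\in\Sigma^*$ with $|s|=n$ let $\hat s=\texttt{@}\,s\,\texttt{\$}$ (length $n+2$, positions $1,\dots,n+2$); $\hat s[i..j)$ denotes the substring at positions $i,\dots,j-1$ (empty if $i\ge j$). The leading (resp. trailing) run of a non-empty string is its longest prefix (resp. suffix) consisting of a single repeated symbol. A bilateral token is a pair $(\sigma,p)$ with $\sigma$ a non-empty string and $p\ge 0$ an integer (split position); $\sigma[1..p]$ is its front, $\sigma[p+1..|\sigma|]$ its back; it is terminal if $p=0$. The Flashback decomposition $\mathcal{F}(s)$ is the token sequence produced as follows. Start with active span $[lo,hi)=[1,n+3)$ of $\hat s$. At a step: if $lo\ge hi$, stop. Let $\ell$ be the length of the leading run of $\hat s[lo..hi)$. If $\ell=hi-lo$, append $(\hat s[lo..hi),0)$ and stop. Otherwise let $\hat s[r..hi)$ be the trailing run of $\hat s[lo..hi)$ and $\sigma=\hat s[lo..lo+\ell)\cdot\hat s[r..hi)$; if $lo+\ell\ge r$, append $(\sigma,0)$ and stop; otherwise append $(\sigma,\ell)$ and repeat with active span $[lo+\ell,r)$. For a token sequence $T=[\tau_0,\dots,\tau_{k-1}]$ with $\tau_i=(\sigma_i,p_i)$, define $N_{k-1}=\sigma_{k-1}$ and $N_i=\sigma_i[1..p_i]\cdot N_{i+1}\cdot\sigma_i[p_i+1..|\sigma_i|]$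 for $i<k-1$; the reconstruction $\mathcal{F}^{-1}(T)$ is $N_0$ with its first and last characters removed. *)

From HB Require Import structures.
From mathcomp Require Import all_boot.
Set Implicit Arguments. Unset Strict Implicit. Unset Printing Implicit Defensive.

(* Extended alphabet: symbols of Sigma (= T, any eqType) plus two fresh
   distinct sentinels @ (At) and $ (Dol). *)
Inductive sym (T : Type) := Chr of T | At | Dol.
Arguments At {T}. Arguments Dol {T}.

Definition sym_eq (T : eqType) (a b : sym T) : bool :=
  match a, b with
  | Chr x, Chr y => x == y
  | At, At => true
  | Dol, Dol => true
  | _, _ => false
  end.
Lemma sym_eqP (T : eqType) : Equality.axiom (@sym_eq T).
Proof.
by case=> [x||] [y||] /=; try (by constructor);
  apply: (iffP eqP) => [->|[]].
Qed.
HB.instance Definition _ (T : eqType) := hasDecEq.Build (sym T) (@sym_eqP T).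

(* hat s = @ s $  (positions 1..n+2) *)
Definition hat (T : eqType) (s : seq T) : seq (sym T) :=
  At :: rcons (map (@Chr T) s) Dol.

(* w[i..j) with 1-based positions: characters at positions i,...,j-1 *)
Definition substr (T : Type) (w : seq T) (i j : nat) : seq T :=
  take (j - i) (drop (i - 1) w).

Definition lead_run_len (T : eqType) (w : seq T) : nat :=
  match w with [::] => 0 | x :: _ => find (predC1 x) w end.

Definition trail_run_len (T : eqType) (w : seq T) : nat :=
  lead_run_len (rev w).

Definition token (T : Type) := (seq T * nat)%type.

(* One run of the Flashback procedure on the active span [lo,hi) of hs,
   with a fuel argument (the span strictly shrinks, so fuel = size hs + 1
   suffices). *)
Fixpoint flash_aux (T : eqType) (hs : seq T) (fuel lo hi : nat)
  : seq (token T) :=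
  match fuel with
  | 0 => [::]
  | fuel'.+1 =>
    if hi <= lo then [::] else
    let w := substr hs lo hi in
    let l := lead_run_len w in
    if l == hi - lo then [:: (w, 0)] else
    let r := hi - trail_run_len w in
    let sigma := substr hs lo (lo + l) ++ substr hs r hi in
    if r <= lo + l then [:: (sigma, 0)]
    else (sigma, l) :: flash_aux hs fuel' (lo + l) r
  end.

Definition flashback (T : eqType) (s : seq T) : seq (token (sym T)) :=
  flash_aux (hat s) (size (hat s)).+1 1 (size s + 3).

Fixpoint nest (T : Type) (ts : seq (token T)) : seq T :=
  match ts with
  | [::] => [::]
  | [:: (sigma, _)] => sigma
  | (sigma, p) :: ts' => take p sigma ++ nest ts' ++ drop p sigma
  end.

Definition flashback_inv (T : Type) (ts : seq (token T)) : seq T :=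
  let N0 := nest ts in take (size N0 - 2) (behead N0).

From mathcomp Require Import all_boot zify.
Set Implicit Arguments. Unset Strict Implicit.

(* Each step of the decomposition cuts the active span w into its leading
   run, an inner span and its trailing run, and the token records the two
   runs with the split point between them; reconstruction re-inserts the
   inner span at that point.  By induction, the tokens produced from a span
   therefore nest back to that span exactly, provided the leading and
   trailing runs never overlap unless the span is a single run.  They cannot:
   a position in both runs would make the two run symbols equal, and then the
   first symbol after the leading run would lie in the trailing run too. *)

Section Runs.

Variable T : eqType.
Implicit Types (w : seq T).

Lemma lead_run_gt0 w : w != [::] -> 0 < lead_run_len w.
Proof. by case: w => //= x w _; rewrite eqxx. Qed.

Lemma lead_run_le_size w : lead_run_len w <= size w.
Proof. by case: w => //= x w; rewrite eqxx /= ltnS find_size. Qed.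

Lemma trail_run_le_size w : trail_run_len w <= size w.
Proof. by rewrite -(size_rev w); apply: lead_run_le_size. Qed.

Lemma nth_lead_run x0 w i : i < lead_run_len w -> nth x0 w i = nth x0 w 0.
Proof.
case: w => // x w; rewrite /lead_run_len => lt_i.
by have /negbFE/eqP -> := before_find x0 lt_i.
Qed.

Lemma nth_lead_run_end x0 w :
  lead_run_len w < size w -> nth x0 w (lead_run_len w) != nth x0 w 0.
Proof.
by case: w => // x w; rewrite /lead_run_len -has_find => /(nth_find x0).
Qed.

Lemma nth_trail_run x0 w i : size w - trail_run_len w <= i < size w ->
  nth x0 w i = nth x0 w (size w).-1.
Proof.
move=> /andP[le_i lt_i]; have size_w_gt0 : 0 < size w by lia.
have lt_j : size w - i.+1 < lead_run_len (rev w).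
  by rewrite -/(trail_run_len w); lia.
rewrite -[in LHS](_ : size w - (size w - i.+1).+1 = i); last by lia.
rewrite -nth_rev ?(nth_lead_run x0 lt_j) ?nth_rev ?size_rev; try lia.
by rewrite subn1.
Qed.

Lemma lead_trail_runs_disjoint w : lead_run_len w < size w ->
  lead_run_len w + trail_run_len w <= size w.
Proof.
case: w => [|x0 w'] //; set w := x0 :: w' => lt_l.
rewrite leqNgt; apply/negP => overlap.
have t_le := trail_run_le_size w.
have in_lead : nth x0 w (size w - trail_run_len w) = nth x0 w 0.
  by apply: nth_lead_run; lia.
have := nth_lead_run_end x0 lt_l.
by rewrite -in_lead !(nth_trail_run x0) ?eqxx //; apply/andP; split; lia.
Qed.

End Runs.

Lemma nest_cons (T : Type) (sigma : seq T) p ts :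
  nest ((sigma, p) :: ts) = take p sigma ++ nest ts ++ drop p sigma.
Proof. by case: ts => [|t ts] //=; rewrite cat_take_drop. Qed.

Section Substr.

Variables (T : Type) (hs : seq T).

Lemma substr_nil lo hi : hi <= lo -> substr hs lo hi = [::].
Proof.
by move=> hi_le_lo; rewrite /substr (_ : hi - lo = 0) ?take0 //; lia.
Qed.

Lemma size_substr lo hi : 0 < lo <= hi -> hi <= (size hs).+1 ->
  size (substr hs lo hi) = hi - lo.
Proof. by move=> *; rewrite /substr size_takel // size_drop; lia. Qed.

Lemma substr_cat lo mid hi : 0 < lo <= mid -> mid <= hi ->
  substr hs lo hi = substr hs lo mid ++ substr hs mid hi.
Proof.
move=> *; rewrite /substr (_ : hi - lo = (mid - lo) + (hi - mid)); last by lia.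
by rewrite takeD drop_drop (_ : mid - lo + (lo - 1) = mid - 1) //; lia.
Qed.

Lemma substr_cat3 lo m1 m2 hi : 0 < lo <= m1 -> m1 <= m2 <= hi ->
  substr hs lo hi = substr hs lo m1 ++ substr hs m1 m2 ++ substr hs m2 hi.
Proof.
move=> *; rewrite (@substr_cat lo m1 hi); try lia.
by rewrite (@substr_cat m1 m2 hi) //; lia.
Qed.

Lemma substr_full : substr hs 1 (size hs).+1 = hs.
Proof. by rewrite /substr subSS subn0 drop0 take_size. Qed.

End Substr.

Lemma nest_flash_aux (T : eqType) (hs : seq T) fuel lo hi :
  0 < lo -> hi <= (size hs).+1 -> hi - lo < fuel ->
  nest (flash_aux hs fuel lo hi) = substr hs lo hi.
Proof.
elim: fuel lo hi => [|fuel IH] lo hi lo_gt0 hi_le lt_fuel //=.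
case: ifP => [hi_le_lo|/negbT]; first by rewrite substr_nil.
rewrite -ltnNge => lo_lt_hi; set w := substr hs lo hi.
have size_w : size w = hi - lo by apply: size_substr; lia.
case: ifP => [/eqP //|/negbT l_neq].
have l_gt0 : 0 < lead_run_len w.
  by apply: lead_run_gt0; rewrite -size_eq0 size_w; lia.
have l_lt : lead_run_len w < size w by have := lead_run_le_size w; lia.
have := lead_trail_runs_disjoint l_lt; rewrite size_w.
set l := lead_run_len w; set t := trail_run_len w => disj.
have w_split : w = substr hs lo (lo + l) ++ substr hs (lo + l) (hi - t)
                   ++ substr hs (hi - t) hi.
  by apply: substr_cat3; lia.
case: ifP => [r_le|/negbT r_gt].
  by rewrite w_split (_ : hi - t = lo + l) ?(substr_nil hs (leqnn _)) //=; lia.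
have size_front : size (substr hs lo (lo + l)) = l by rewrite size_substr; lia.
rewrite nest_cons IH; try lia.
by rewrite take_size_cat // drop_size_cat // w_split.
Qed.

Theorem theorem4p2 (Sigma : eqType) (s : seq Sigma) :
  flashback_inv (flashback s) = map (@Chr Sigma) s.
Proof.
have size_hat : size (hat s) = size s + 2.
  by rewrite /hat /= size_rcons size_map addn2.
rewrite /flashback_inv /flashback.
have -> : size s + 3 = (size (hat s)).+1 by rewrite size_hat; lia.
rewrite nest_flash_aux ?substr_full ?subn1 // size_hat addnK /hat /= -cats1.
by rewrite -(size_map (@Chr Sigma)) take_size_cat.
Qed.
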